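(* Let $p\in[1,\infty)$, let $N\subseteq\mathbb{N}$ be nonempty, and let $M:=\{0\}\cup\{\tfrac1k e_{(k,\pm1)}:k\in N\}\cup\{\tfrac1k e_{(k,+1)}:k\in\mathbb{N}\setminus N\}\subseteq\ell^p$, with the metric induced by $\|\cdot\|_p$. Let $n\in\mathbb{N}$ with $n>1$, and let $C\subseteq M$ consist of $n$ points of $M$ of largest $\ell^p$ norm (i.e., $|C|=n$ and every point of $M\setminus C$ has norm at most the minimum norm of points of $C$). Then $C$ is an optimal code in $M$ and is unique up to isometry.
   Context: The standard basis of $\ell^p$ is indexed as $e_{(k,+1)}:=e_{2k-1}$ and $e_{(k,-1)}:=e_{2k}$ for $k\in\mathbb{N}$. $M$ is compact. An optimal code of size $n$ is an $n$-element subset of $M$ maximizing the minimum distance between distinct points; unique up to isometry means every optimal code of size $n$ is the image of $C$ under an isometry of $M$. *)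

From HB Require Import structures.
From mathcomp Require Import all_boot all_order all_algebra.
From mathcomp Require Import all_classical all_reals all_analysis.
Set Implicit Arguments. Unset Strict Implicit. Unset Printing Implicit Defensive.
Import Order.TTheory GRing.Theory Num.Theory.
Local Open Scope classical_set_scope.
Local Open Scope ring_scope.

Section Defs.
Variable R : realType.

(* real sequences indexed by nat; coordinate i of the sequence is the
   paper's coordinate i+1 *)
Definition seqR := nat -> R.

Definition lpnorm (p : R) (x : seqR) : R :=
  (limn (fun m : nat => \sum_(i < m) `|x i| `^ p)) `^ (p^-1).

Definition lpdist (p : R) (x y : seqR) : R := lpnorm p (fun i => x i - y i).

Definition ebasis (j : nat) : seqR := fun i => if i == j.-1 then 1 else 0.

(* e_{(k,+1)} := e_{2k-1},  e_{(k,-1)} := e_{2k} *)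
Definition eplus (k : nat) : seqR := ebasis (2 * k).-1.
Definition eminus (k : nat) : seqR := ebasis (2 * k).

Definition scaleseq (a : R) (x : seqR) : seqR := fun i => a * x i.

Definition zeroseq : seqR := fun _ => 0.

Definition Mset (N : set nat) : set seqR :=
  [set zeroseq]
  `|` [set scaleseq (k%:R)^-1 (eplus k) | k in N]
  `|` [set scaleseq (k%:R)^-1 (eminus k) | k in N]
  `|` [set scaleseq (k%:R)^-1 (eplus k) | k in [set k | (0 < k)%N /\ ~ N k]].

End Defs.

Section Codes.
Context {T : Type} {R : realType}.

Definition is_code (d : T -> T -> R) (M : set T) (n : nat) (C : set T) : Prop :=
  C `<=` M /\ exists f : 'I_n -> T, injective f /\ C = range f.

Definition min_dist (d : T -> T -> R) (C : set T) : R :=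
  inf [set r | exists x y, C x /\ C y /\ x <> y /\ r = d x y].

Definition optimal_code (d : T -> T -> R) (M : set T) (n : nat) (C : set T) : Prop :=
  is_code d M n C /\
  forall C', is_code d M n C' -> min_dist d C' <= min_dist d C.

Definition isometry_of (d : T -> T -> R) (M : set T) (f : T -> T) : Prop :=
  (forall x, M x -> M (f x)) /\
  (forall y, M y -> exists2 x, M x & f x = y) /\
  (forall x y, M x -> M y -> d (f x) (f y) = d x y).

Definition unique_up_to_isometry (d : T -> T -> R) (M : set T) (n : nat) (C : set T) : Prop :=
  forall C', optimal_code d M n C' ->
    exists f, isometry_of d M f /\ C' = f @` C.

End Codes.

From HB Require Import structures.
From mathcomp Require Import all_boot all_order all_algebra.
From mathcomp Require Import all_classical all_reals all_analysis.
From mathcomp Require Import zify.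
Import Order.TTheory GRing.Theory Num.Theory.
Local Open Scope classical_set_scope.
Local Open Scope ring_scope.

(* Distances in M are radial: distinct points of M have disjoint supports, so
   their distance is g(|x|, |y|) with g(s, t) = (s^p + t^p)^(1/p) strictly
   increasing, and each norm level of M holds at most two points.  If a <= b are
   the two smallest norms in C, the minimum distance of C is g(a, b).  By
   pigeonhole every n-point code has a point of norm <= a and another one of norm
   <= b, so C is optimal.  In an optimal code the first point u must have norm
   exactly a and all others norm >= b, which puts them in C; the code is then C
   with one point exchanged for u of the same norm, and such an exchange is an
   isometry of M. *)

Section IndexedPoints.
Context {T : Type} {n : nat}.

Lemma leq_card_covered (f f' : 'I_n -> T) (A B : {set 'I_n}) : injective f' ->
  {in A, forall i, exists2 j, j \in B & f j = f' i} -> (#|A| <= #|B|)%N.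
Proof.
move=> f'_inj cover.
have /choice[h hP] : forall i, exists j, i \in A -> j \in B /\ f j = f' i.
  move=> i; case: (boolP (i \in A)) => [iA|iA]; last by exists i.
  by have [j jB fj] := cover i iA; exists j.
rewrite -(card_in_imset (f := h)); last first.
  move=> i i' iA i'A hii'; apply: f'_inj.
  by rewrite -(hP i iA).2 -(hP i' i'A).2 hii'.
by apply/subset_leq_card/fintype.subsetP => _ /imsetP[i iA ->]; exact: (hP i iA).1.
Qed.

Lemma range_setD1_exchange {f f' : 'I_n -> T} {i : 'I_n} :
  injective f -> injective f' ->
  (forall k, k != i -> range f (f' k)) ->
  exists j, range f `\ f j = range f' `\ f' i.
Proof.
move=> f_inj f'_inj others_in.
(* [S] indexes the points of [range f] met by the [f' k], [k != i]; counting
   both ways shows that it misses exactly one index [j]. *)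
pose S := [set j | `[< exists2 k, k != i & f' k = f j >]]%SET.
have S_card : #|S| = n.-1.
  rewrite -[n in n.-1]card_ord -(cardsC1 i); apply/eqP; rewrite eqn_leq.
  apply/andP; split.
    apply: (@leq_card_covered f' f _ _ f_inj) => j.
    by rewrite inE => /asboolP[k ki fk]; exists k; rewrite ?in_setC1.
  apply: (@leq_card_covered f f' _ _ f'_inj) => k; rewrite in_setC1 => ki.
  have [j _ fj] := others_in k ki.
  by exists j; rewrite // inE; apply/asboolP; exists k.
have [j Sj] : exists j, ~: S = [set j]%SET.
  apply/cards1P; have := cardsC S; have := ltn_ord i.
  rewrite S_card card_ord; lia.
exists j; apply/seteqP; split=> x.
  move=> [[j' _ <-] /= fj'_neq].
  have : j' \notin ~: S by rewrite Sj finset.in_set1; apply/eqP => ej'; apply: fj'_neq; rewrite ej'.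
  rewrite finset.in_setC negbK inE => /asboolP[k ki <-]; split; first by exists k.
  by move=> /= /f'_inj eki; move: ki; rewrite eki eqxx.
move=> [[k _ <-] /= fk_neq].
have ki : k != i by apply/eqP => eki; apply: fk_neq; rewrite eki.
have [j' _ fj'] := others_in k ki.
have Sj' : j' \in S by rewrite inE; apply/asboolP; exists k.
split; first by exists j'.
move=> /= fkj; have : j' \in ~: S by rewrite Sj finset.in_set1; apply/eqP/f_inj; rewrite fj' fkj.
by rewrite finset.in_setC Sj'.
Qed.

End IndexedPoints.

Section Exchange.
Context {T : Type} (u v : T).

Definition exchange (z : T) : T :=
  if `[< z = u >] then v else if `[< z = v >] then u else z.

Lemma exchangeL : exchange u = v.
Proof. by rewrite /exchange; case: asboolP. Qed.

Lemma exchangeR : exchange v = u.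
Proof. by rewrite /exchange; case: asboolP => [->|_]; last case: asboolP. Qed.

Lemma exchange_id z : z <> u -> z <> v -> exchange z = z.
Proof. by move=> zu zv; rewrite /exchange; do 2 case: asboolP => // _. Qed.

Lemma exchange_cases z :
  [\/ z = u /\ exchange z = v, z = v /\ exchange z = u | exchange z = z].
Proof.
rewrite /exchange; case: asboolP => [|zu]; first by constructor 1.
by case: asboolP => [|zv]; [constructor 2|constructor 3].
Qed.

Lemma exchangeK : involutive exchange.
Proof.
move=> z; have [[-> ->]|[-> ->]|fixed] := exchange_cases z.
- exact: exchangeR.
- exact: exchangeL.
- by rewrite !fixed.
Qed.

Lemma exchange_in (M : set T) z : M u -> M v -> M z -> M (exchange z).
Proof. by move=> Mu Mv Mz; have [[_ ->]|[_ ->]|->] := exchange_cases z. Qed.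

Lemma exchange_invariant (S : Type) (phi : T -> S) : phi u = phi v ->
  forall z, phi (exchange z) = phi z.
Proof. by move=> phi_uv z; have [[-> ->]|[-> ->]|->] := exchange_cases z. Qed.

Lemma image_exchange (A B : set T) : A v -> B u -> A `\ v = B `\ u ->
  exchange @` A = B.
Proof.
move=> Av Bu AB; apply/seteqP; split=> [_ [x Ax <-]|y By].
  have [->|xv] := pselect (x = v); first by rewrite exchangeR.
  have [Bx xu] : (B `\ u) x by rewrite -AB.
  by rewrite exchange_id.
have [->|yu] := pselect (y = u); first by exists v; rewrite ?exchangeR.
have [Ay yv] : (A `\ v) y by rewrite AB.
by exists y; rewrite ?exchange_id.
Qed.

End Exchange.

Section RadialDistance.
Variables (R : realType) (T : Type) (M : set T) (nu : T -> R)
  (g : R -> R -> R) (d : T -> T -> R).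
Hypothesis d_radial : forall {x y}, M x -> M y -> x <> y -> d x y = g (nu x) (nu y).
Hypothesis d_ge0 : forall x y, 0 <= d x y.
Hypothesis d_xx : forall x, d x x = 0.
Hypothesis nu_ge0 : forall {x}, M x -> 0 <= nu x.
Hypothesis gC : forall a b, g a b = g b a.
Hypothesis g_ltl : forall a a' b, 0 <= a -> a < a' -> 0 <= b -> g a b < g a' b.
Hypothesis level_le2 : forall x y z, M x -> M y -> M z ->
  nu x = nu z -> nu y = nu z -> x <> y -> z = x \/ z = y.

Lemma g_ltr a b b' : 0 <= a -> 0 <= b -> b < b' -> g a b < g a b'.
Proof. by move=> a0 b0 bb'; rewrite gC (gC a); apply: g_ltl. Qed.

Lemma g_le a a' b b' : 0 <= a -> a <= a' -> 0 <= b -> b <= b' -> g a b <= g a' b'.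
Proof.
move=> a0 aa' b0 bb'; apply: (@le_trans _ _ (g a' b)).
  by move: aa'; rewrite le_eqVlt => /orP[/eqP->//|/g_ltl lt]; exact/ltW/lt.
have a'0 := le_trans a0 aa'.
by move: bb'; rewrite le_eqVlt => /orP[/eqP->//|/g_ltr lt]; exact/ltW/lt.
Qed.

Lemma min_dist_le {S : set T} {x y} : S x -> S y -> x <> y -> min_dist d S <= d x y.
Proof.
move=> Sx Sy xy; apply: ge_inf; last by exists x, y.
by exists 0 => r [x' [y' [_ [_ [_ ->]]]]].
Qed.

Lemma isometry_exchange {u v} : M u -> M v -> nu u = nu v ->
  isometry_of d M (exchange u v).
Proof.
move=> Mu Mv nu_uv; have M_ex z : M z -> M (exchange u v z) := @exchange_in _ u v M z Mu Mv.
split=> [z|]; first exact: M_ex.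
split=> [y My|x y Mx My].
  by exists (exchange u v y); [exact: M_ex|exact: exchangeK].
case: (pselect (x = y)) => [<-|xy]; first by rewrite !d_xx.
have ex_neq : exchange u v x <> exchange u v y.
  by move=> e; apply: xy; rewrite -(exchangeK u v x) e exchangeK.
have [Mx' My'] := (M_ex x Mx, M_ex y My).
by rewrite !d_radial // !(@exchange_invariant _ u v _ nu nu_uv).
Qed.

Section TopCode.
Context {n : nat} {f : 'I_n -> T} {j0 j1 : 'I_n}.
Hypothesis f_inj : injective f.
Hypothesis f_in : forall j, M (f j).
Hypothesis j1_neq : j1 != j0.
Hypothesis j0_min : forall j, nu (f j0) <= nu (f j).
Hypothesis j1_min : forall j, j != j0 -> nu (f j1) <= nu (f j).
Hypothesis above_in : forall {x}, M x -> nu (f j0) < nu x -> range f x.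

Local Notation a := (nu (f j0)).
Local Notation b := (nu (f j1)).

Lemma card_above_le {f' : 'I_n -> T} {t} : injective f' -> (forall i, M (f' i)) ->
  a <= t -> (#|[set i | (t < nu (f' i))%R]%SET| <= #|[set j | (t < nu (f j))%R]%SET|)%N.
Proof.
move=> f'_inj f'_in at_le; apply: (@leq_card_covered _ _ f f' _ _ f'_inj) => i.
rewrite inE => t_lt; have [j _ fj] := above_in (f'_in i) (le_lt_trans at_le t_lt).
by exists j; rewrite // inE fj.
Qed.

Lemma min_le_second : a <= b.
Proof. exact: j0_min. Qed.

Lemma exists_le_min {f' : 'I_n -> T} : injective f' -> (forall i, M (f' i)) ->
  exists i, nu (f' i) <= a.
Proof.
move=> f'_inj f'_in; apply: contrapT => /forallNP all_above.
have := card_above_le f'_inj f'_in (lexx a).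
have -> : [set i | (a < nu (f' i))%R]%SET = [set: 'I_n]%SET.
  by apply/setP => i; rewrite !inE ltNge; apply/negP/all_above.
have sub : [set j | (a < nu (f j))%R]%SET \subset [set~ j0]%SET.
  by apply/fintype.subsetP => j; rewrite !inE; apply: contraTneq => ->; rewrite ltxx.
have := subset_leq_card sub; rewrite cardsT cardsC1 card_ord.
have := ltn_ord j0; lia.
Qed.

Lemma exists_other_le_second {f' : 'I_n -> T} i : injective f' -> (forall i, M (f' i)) ->
  exists2 i', i' != i & nu (f' i') <= b.
Proof.
move=> f'_inj f'_in; apply: contrapT => others_above.
have := card_above_le f'_inj f'_in min_le_second.
have sub' : [set~ i]%SET \subset [set i' | (b < nu (f' i'))%R]%SET.
  apply/fintype.subsetP => i'; rewrite !inE => i'i; rewrite ltNge.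
  by apply/negP => le_b; apply: others_above; exists i'.
have sub : [set j | (b < nu (f j))%R]%SET \subset ~: [set j0; j1]%SET.
  apply/fintype.subsetP => j; rewrite !inE negb_or.
  by apply: contraTT => /nandP[] /negPn/eqP->; rewrite -leNgt ?min_le_second.
have := subset_leq_card sub; have := subset_leq_card sub'.
have := cardsC [set j0; j1]%SET; rewrite cards2 eq_sym j1_neq cardsC1 card_ord.
lia.
Qed.

Lemma min_dist_range : min_dist d (range f) = g a b.
Proof.
have f01 : f j0 <> f j1 by move/f_inj/eqP; rewrite eq_sym (negbTE j1_neq).
apply/le_anti/andP; split.
  rewrite -(d_radial (f_in j0) (f_in j1) f01).
  by apply: min_dist_le; [exists j0|exists j1|].
apply: lb_le_inf; first by exists (d (f j0) (f j1)), (f j0), (f j1).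
move=> _ [_ [_ [[i _ <-] [[i' _ <-] [fii' ->]]]]]; rewrite d_radial //.
have ii' : i != i' by apply: contra_notN fii' => /eqP->.
have nu_f_ge0 j : 0 <= nu (f j) := nu_ge0 (f_in j).
have [ei|i0] := eqVneq i j0.
  by rewrite ei; apply: g_le => //; rewrite j1_min // -ei eq_sym.
by rewrite gC; apply: g_le; rewrite ?nu_f_ge0 ?j0_min ?j1_min.
Qed.

Lemma min_dist_code_le C' : is_code d M n C' -> min_dist d C' <= g a b.
Proof.
move=> [C'M [f' [f'_inj eC']]]; subst C'.
have f'_in i : M (f' i) by apply: C'M; exists i.
have [i le_a] := exists_le_min f'_inj f'_in.
have [i' i'i le_b] := exists_other_le_second i f'_inj f'_in.
have ne : f' i' <> f' i by move/f'_inj/eqP; rewrite (negbTE i'i).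
apply: (le_trans (min_dist_le _ _ ne)); [by exists i'|by exists i|].
by rewrite d_radial // gC; apply: g_le; rewrite ?nu_ge0.
Qed.

Lemma range_optimal : optimal_code d M n (range f).
Proof.
split; first by split; [move=> _ [j _ <-]|exists f].
by move=> C' /min_dist_code_le; rewrite min_dist_range.
Qed.

Lemma separated_code_radii {f' : 'I_n -> T} {i} : injective f' -> (forall i, M (f' i)) ->
  g a b <= min_dist d (range f') -> nu (f' i) <= a ->
  nu (f' i) = a /\ forall k, k != i -> b <= nu (f' k).
Proof.
move=> f'_inj f'_in sep le_a.
have sep_i k : k != i -> g a b <= g (nu (f' i)) (nu (f' k)).
  move=> ki; have ik : f' i <> f' k by move/f'_inj/eqP; rewrite eq_sym (negbTE ki).
  rewrite -(d_radial (f'_in i) (f'_in k) ik).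
  by apply: (le_trans sep); apply: min_dist_le ik; [exists i|exists k].
have nu_i : nu (f' i) = a.
  apply/eqP; rewrite eq_le le_a /= leNgt; apply/negP => lt_a.
  have [i' i'i le_b] := exists_other_le_second i f'_inj f'_in.
  have := sep_i i' i'i; apply/negP; rewrite -ltNge.
  apply: (@lt_le_trans _ _ (g a (nu (f' i')))); first by rewrite g_ltl ?nu_ge0.
  by rewrite gC (gC a); apply: g_le; rewrite ?nu_ge0.
split=> // k ki; rewrite leNgt; apply/negP => lt_b.
by have := sep_i k ki; apply/negP; rewrite -ltNge nu_i g_ltr ?nu_ge0.
Qed.

Lemma optimal_code_exchange C' : optimal_code d M n C' ->
  exists phi, isometry_of d M phi /\ C' = phi @` range f.
Proof.
move=> [[C'M [f' [f'_inj eC']]] opt]; subst C'.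
have f'_in i : M (f' i) by apply: C'M; exists i.
have sep : g a b <= min_dist d (range f').
  by rewrite -min_dist_range; apply: opt; case: range_optimal.
have [i le_a] := exists_le_min f'_inj f'_in.
have [nu_u others_ge] := separated_code_radii f'_inj f'_in sep le_a.
set u := f' i in nu_u *.
have level_a z : M z -> nu z = a -> b = a -> z = f j0 \/ z = f j1.
  move=> Mz za ba; apply: level_le2 => //; rewrite ?za ?ba //.
  by move/f_inj/eqP; rewrite eq_sym (negbTE j1_neq).
have others_in k : k != i -> range f (f' k).
  move=> ki; have [lt_a|ge_a] := ltP a (nu (f' k)); first exact: above_in.
  have b_a : b = a by apply/le_anti; rewrite min_le_second (le_trans (others_ge k ki)).
  have za : nu (f' k) = a by apply/le_anti; rewrite ge_a -b_a others_ge.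
  by have [->|->] := level_a _ (f'_in k) za b_a; [exists j0|exists j1].
have [j exch] := range_setD1_exchange f_inj f'_inj others_in.
(* The point [f j] that [u] replaces has radius [a]: otherwise [f j0] and [f j1]
   both survive in the optimal code, which forces [b = a] and puts three points
   on the level [a]. *)
have nu_v : nu (f j) = a.
  apply/eqP; rewrite eq_le j0_min andbT leNgt; apply/negP => lt_v.
  have fv_neq j' : nu (f j') = a -> f j' <> f j.
    by move=> ej' /f_inj ej; rewrite -ej ej' ltxx in lt_v.
  have [[k _ fk] f0u] : (range f' `\ u) (f j0).
    by rewrite -exch; split; [exists j0|exact: fv_neq].
  have ki : k != i by apply/eqP => eki; apply: f0u; rewrite -fk eki.
  have b_a : b = a by apply/le_anti; rewrite min_le_second -fk others_ge.
  have [_ f1u] : (range f' `\ u) (f j1).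
    by rewrite -exch; split; [exists j1|exact: fv_neq].
  by have [] := level_a u (f'_in i) nu_u b_a => e; [apply: f0u|apply: f1u]; rewrite e.
exists (exchange u (f j)); split.
  by apply: (isometry_exchange (f'_in i) (f_in j)); rewrite nu_u nu_v.
by apply/esym/image_exchange; [exists j|exists i|rewrite exch].
Qed.

End TopCode.

Theorem top_code_optimal_unique n C : (1 < n)%N -> is_code d M n C ->
  (forall x c, M x -> ~ C x -> C c -> nu x <= nu c) ->
  optimal_code d M n C /\ unique_up_to_isometry d M n C.
Proof.
move=> n_gt1 [CM [f [f_inj eC]]] top; subst C.
have f_in j : M (f j) by apply: CM; exists j.
have [j0 _ j0_min] := @arg_minP _ _ 'I_n (Ordinal (ltnW n_gt1)) predT (nu \o f) isT.
have [k kj0] : exists k : 'I_n, k != j0.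
  have [e|ne] := eqVneq j0 (Ordinal n_gt1); last by exists (Ordinal n_gt1); rewrite eq_sym.
  by exists (Ordinal (ltnW n_gt1)); rewrite e.
have [j1 j1_neq j1_min] := @arg_minP _ _ 'I_n k (fun j => j != j0) (nu \o f) kj0.
have above_in x : M x -> nu (f j0) < nu x -> range f x.
  move=> Mx lt_x; apply: contrapT => nfx.
  by have := top x (f j0) Mx nfx (ex_intro2 _ _ j0 I erefl); rewrite leNgt lt_x.
have j0_min' j : nu (f j0) <= nu (f j) by exact: j0_min.
split; first exact: (range_optimal f_inj f_in j1_neq j0_min' j1_min above_in).
by move=> C' /(optimal_code_exchange f_inj f_in j1_neq j0_min' j1_min above_in).
Qed.

End RadialDistance.

Section Spikes.
Context {R : realType} (p : R).
Hypothesis p_gt0 : 0 < p.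

Definition spike (j : nat) (c : R) : seqR R := fun i => if i == j then c else 0.

Definition lp_pair (a b : R) : R := (a `^ p + b `^ p) `^ p^-1.

Lemma lpnorm_finsupp (x : seqR R) m : (forall i, (m <= i)%N -> x i = 0) ->
  lpnorm p x = (\sum_(i < m) `|x i| `^ p) `^ p^-1.
Proof.
move=> x_supp; rewrite /lpnorm; congr (_ `^ _).
suff : (fun k => \sum_(i < k) `|x i| `^ p) @ \oo --> \sum_(i < m) `|x i| `^ p.
  exact: cvg_lim.
apply: cvg_near_cst; near=> k.
have mk : (m <= k)%N by near: k; exists m.
rewrite (big_ord_widen k (fun i => `|x i| `^ p) mk) [RHS]big_mkcond /=.
apply: eq_bigr => i _; case: ltnP => // mi.
by rewrite x_supp // normr0 powR0 // gt_eqF.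
Unshelve. all: by end_near.
Qed.

Lemma lpnorm_pair {x : seqR R} {j j' : nat} : j != j' ->
  (forall i, i != j -> i != j' -> x i = 0) ->
  lpnorm p x = lp_pair `|x j| `|x j'|.
Proof.
move=> jj' x_supp; rewrite (@lpnorm_finsupp x (maxn j j').+1); last first.
  by move=> i; rewrite ltnNge leq_max negb_or => /andP[ij ij']; apply: x_supp; lia.
rewrite /lp_pair; congr (_ `^ _).
rewrite (eq_bigr (fun i : 'I_(maxn j j').+1 => (if (i : nat) == j then `|x j| `^ p else 0)
  + (if (i : nat) == j' then `|x j'| `^ p else 0))); last first.
  move=> i _; have [->|ij] := eqVneq (i : nat) j; first by rewrite (negbTE jj') addr0.
  have [->|ij'] := eqVneq (i : nat) j'; first by rewrite add0r.
  by rewrite x_supp // normr0 powR0 ?addr0 // gt_eqF.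
rewrite big_split /= -!big_mkcond /= (big_ord1_eq _ (fun=> `|x j| `^ p)).
by rewrite (big_ord1_eq _ (fun=> `|x j'| `^ p)) !ltnS leq_maxl leq_maxr.
Qed.

Lemma lpnorm_spike j c : 0 <= c -> lpnorm p (spike j c) = c.
Proof.
move=> c_ge0; rewrite (@lpnorm_pair _ j j.+1) ?ltn_eqF //; last first.
  by move=> i ij _; rewrite /spike (negbTE ij).
rewrite /lp_pair /spike eqxx gtn_eqF // normr0 powR0 ?gt_eqF // addr0.
by rewrite ger0_norm // -powRrM mulfV ?gt_eqF // powRr1.
Qed.

Lemma lpdist_spike j j' c c' : j != j' -> 0 <= c -> 0 <= c' ->
  lpdist p (spike j c) (spike j' c') = lp_pair c c'.
Proof.
move=> jj' c_ge0 c'_ge0; rewrite /lpdist (lpnorm_pair jj'); last first.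
  by move=> i ij ij'; rewrite /spike (negbTE ij) (negbTE ij') subr0.
rewrite /spike !eqxx (negbTE jj') eq_sym (negbTE jj') subr0 sub0r normrN.
by rewrite !ger0_norm.
Qed.

Lemma lpdist_xx x : lpdist p x x = 0.
Proof.
rewrite /lpdist (_ : (fun i => x i - x i) = spike 0 0) ?lpnorm_spike //.
by apply/funext => i; rewrite subrr /spike; case: ifP.
Qed.

Lemma lp_pair_ltl a a' b : 0 <= a -> a < a' -> 0 <= b -> lp_pair a b < lp_pair a' b.
Proof.
move=> a_ge0 aa' b_ge0; have a'_ge0 := le_trans a_ge0 (ltW aa').
rewrite /lp_pair gt0_ltr_powR ?invr_gt0 ?nnegrE ?addr_ge0 ?powR_ge0 //.
by rewrite ltrD2r gt0_ltr_powR.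
Qed.

End Spikes.

Section MsetPoints.
Context {R : realType} (p : R) (N : set nat).
Hypothesis p_gt0 : 0 < p.
Hypothesis N_gt0 : N `<=` [set k | (0 < k)%N].

Definition weight (j : nat) : R := (j./2.+1)%:R^-1.

(* [Mpoint (2k-2)] is the paper's [e_(k,+1) / k] and [Mpoint (2k-1)] its [e_(k,-1) / k]. *)
Definition Mpoint (j : nat) : seqR R := spike j (weight j).

Lemma weight_gt0 j : 0 < weight j.
Proof. by rewrite invr_gt0 ltr0n. Qed.

Lemma lpnorm_Mpoint j : lpnorm p (Mpoint j) = weight j.
Proof. exact/lpnorm_spike/ltW/weight_gt0. Qed.

Lemma lpnorm_zeroseq : lpnorm p (zeroseq R) = 0.
Proof.
by rewrite (_ : zeroseq R = spike 0 0) ?lpnorm_spike // /spike; apply/funext => i; case: ifP.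
Qed.

Lemma scaleseq_ebasis j c : scaleseq c (ebasis R j.+1) = spike j c.
Proof. by apply/funext => i; rewrite /scaleseq /ebasis /spike; case: ifP; rewrite ?mulr1 ?mulr0. Qed.

Lemma Mset_Mpoint x : Mset N x -> x = zeroseq R \/ exists j, x = Mpoint j.
Proof.
have plus k : (0 < k)%N -> scaleseq k%:R^-1 (eplus R k) = Mpoint (2 * k).-2.
  move=> k_gt0; rewrite /eplus (_ : (2 * k).-1 = (2 * k).-2.+1); last by lia.
  by rewrite scaleseq_ebasis /Mpoint /weight (_ : (2 * k).-2./2.+1 = k) //; lia.
have minus k : (0 < k)%N -> scaleseq k%:R^-1 (eminus R k) = Mpoint (2 * k).-1.
  move=> k_gt0; rewrite /eminus (_ : 2 * k = (2 * k).-1.+1)%N; last by lia.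
  by rewrite scaleseq_ebasis /Mpoint /weight (_ : (2 * k).-1./2.+1 = k) //; lia.
case=> [[[->|[k Nk <-]]|[k Nk <-]]|[k [k_gt0 _] <-]]; [by left|right..].
- by exists (2 * k).-2; apply/plus/N_gt0.
- by exists (2 * k).-1; apply/minus/N_gt0.
- by exists (2 * k).-2; apply/plus.
Qed.

Lemma Mset_lpdist x y : Mset N x -> Mset N y -> x <> y ->
  lpdist p x y = lp_pair p (lpnorm p x) (lpnorm p y).
Proof.
have zero_spike j : zeroseq R = spike j 0 by apply/funext => i; rewrite /spike; case: ifP.
have w_ge0 j : 0 <= weight j := ltW (weight_gt0 j).
move=> /Mset_Mpoint[->|[j ->]] /Mset_Mpoint[->|[j' ->]] xy //.
- rewrite lpnorm_zeroseq lpnorm_Mpoint (zero_spike j'.+1).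
  by rewrite lpdist_spike ?gtn_eqF.
- rewrite lpnorm_zeroseq lpnorm_Mpoint (zero_spike j.+1).
  by rewrite lpdist_spike ?ltn_eqF.
- rewrite !lpnorm_Mpoint lpdist_spike //.
  by apply: contra_notN xy => /eqP->.
Qed.

Lemma Mset_level_le2 x y z : Mset N x -> Mset N y -> Mset N z ->
  lpnorm p x = lpnorm p z -> lpnorm p y = lpnorm p z -> x <> y -> z = x \/ z = y.
Proof.
have norm_Mpoint w j : Mset N w -> lpnorm p w = weight j ->
    exists2 j', w = Mpoint j' & j'./2 = j./2.
  move=> /Mset_Mpoint[->|[j' ->]]; rewrite ?lpnorm_zeroseq ?lpnorm_Mpoint => wj.
    by move: (weight_gt0 j); rewrite -wj ltxx.
  by exists j' => //; move/invr_inj/eqP: wj; rewrite eqr_nat => /eqP[].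
have norm0 w : Mset N w -> lpnorm p w = 0 -> w = zeroseq R.
  move=> /Mset_Mpoint[//|[j ->]]; rewrite lpnorm_Mpoint => w0.
  by move: (weight_gt0 j); rewrite w0 ltxx.
move=> Mx My /Mset_Mpoint[-> | [j ->]] xz yz xy.
  by rewrite lpnorm_zeroseq in xz yz; case: xy; rewrite (norm0 x) // (norm0 y).
rewrite lpnorm_Mpoint in xz yz.
have [jx ex hx] := norm_Mpoint _ _ Mx xz; have [jy ey hy] := norm_Mpoint _ _ My yz.
subst x y; have jxy : jx <> jy by move=> e; apply: xy; rewrite e.
have [->|->] : j = jx \/ j = jy by lia.
  by left.
by right.
Qed.

End MsetPoints.

Theorem lemma4p19 (R : realType) (p : R) (N : set nat) (n : nat) (C : set (seqR R)) :
  1 <= p ->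
  N `<=` [set k | (0 < k)%N] -> N !=set0 ->
  (1 < n)%N ->
  is_code (lpdist p) (Mset N) n C ->
  (forall x c, Mset N x -> ~ C x -> C c -> lpnorm p x <= lpnorm p c) ->
  optimal_code (lpdist p) (Mset N) n C /\
  unique_up_to_isometry (lpdist p) (Mset N) n C.
Proof.
move=> p_ge1 N_gt0 _; have p_gt0 : 0 < p := lt_le_trans ltr01 p_ge1.
apply: (@top_code_optimal_unique _ _ _ _ (lp_pair p)).
- exact: Mset_lpdist.
- by move=> x y; apply: powR_ge0.
- exact: lpdist_xx.
- by move=> x _; apply: powR_ge0.
- by move=> a b; rewrite /lp_pair addrC.
- exact: lp_pair_ltl.
- exact: Mset_level_le2.
Qed.
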